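(* If an abstract negotiation method $\mathcal M$ is Pareto efficient and symmetric, then every party can manipulate $\mathcal M$.
   Context: Setting: $\mathcal D\subsetneq\mathbb R^m$ is closed, convex, bounded. $\mathcal U$ is the set of functions $u:\mathcal D\to\mathbb R$ with closed convex superlevel sets and a unique global maximizer. An $n$-party ANM is a map $\mathcal M:\mathcal U^n\times\mathcal D\to\mathcal U$ with settlement $\mathcal S(\mathcal M,\vec u,x_0)=\arg\max_{x\in\mathcal D}\mathcal M(\vec u,x_0)(x)$; ANMs are assumed continuous ($x\mapsto\mathcal S(\mathcal M,\vec u,x)$ continuous, and $\vec u\mapsto\mathcal S(\mathcal M,\vec u,x_0)$ continuous for some pseudometric on $\mathcal U^n$). $\mathcal F(u,p)=\{x:u(x)\ge u(p)\}$, $\mathcal F(\vec u,p)=\bigcap_i\mathcal F(u_i,p)$, $\mathcal P(\vec u)=\{x:\mathcal F(\vec u,x)=\{x\}\}$; $\mathcal M$ is Pareto efficient if $\mathcal S(\mathcal M,\vec u,x_0)\in\mathcal P(\vec u)$ for all $(\vec u,x_0)$; symmetric if $\mathcal S(\mathcal M,\vec u,x)=\mathcal S(\mathcal M,\vec u_\sigma,x)$ for every permutation $\sigma$ of the parties. Party $i$ can manipulate $\mathcal M$ if there exist $\vec u\in\mathcal U^n$, $x_0\in\mathcal D$, $\tilde u_i\in\mathcal U$ with $u_i(\mathcal S(\mathcal M,\tilde u_i,\vec u_{-i},x_0))>u_i(\mathcal S(\mathcal M,\vec u,x_0))$, where $(\tilde u_i,\vec u_{-i})$ replaces $u_i$ by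 $\tilde u_i$.
   Formalization: The number of parties n is at least 2, and $\mathcal D$ contains three affinely independent points, so $\mathcal D$ is not contained in any line. The statement above fails without it. *)

From HB Require Import structures.
From mathcomp Require Import all_boot all_order all_algebra all_fingroup.
From mathcomp Require Import all_classical all_reals all_analysis.
Set Implicit Arguments. Unset Strict Implicit. Unset Printing Implicit Defensive.
Import Order.TTheory GRing.Theory Num.Theory.
Import numFieldNormedType.Exports.
Local Open Scope classical_set_scope.
Local Open Scope ring_scope.

Section ANM.
Variables (R : realType) (m n : nat) (D : set 'rV[R]_m).

Definition pt := {x : 'rV[R]_m | D x}.

Definition embed (A : set pt) : set 'rV[R]_m := (@proj1_sig _ _) @` A.

Definition Fsup (u : pt -> R) (p : pt) : set pt := [set x | u p <= u x].

Definition inU (u : pt -> R) : Prop :=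
  (forall p, closed (embed (Fsup u p)) /\ convex_set (embed (Fsup u p))) /\
  (exists! x : pt, forall y : pt, u y <= u x).

Definition profile := 'I_n -> pt -> R.
Definition profileU (u : profile) : Prop := forall i, inU (u i).

(* an n-party ANM: a map U^n x D -> U (arbitrary outside U^n) *)
Definition is_ANM (M : profile -> pt -> (pt -> R)) : Prop :=
  forall u x0, profileU u -> inU (M u x0).

Definition is_argmax (f : pt -> R) (s : pt) : Prop := forall y, f y <= f s.

(* s = S(M, u, x0) (the argmax is unique since M u x0 is in U) *)
Definition settles (M : profile -> pt -> (pt -> R)) (u : profile) (x0 s : pt) :=
  is_argmax (M u x0) s.

Definition cont_in_x (M : profile -> pt -> (pt -> R)) : Prop :=
  forall u, profileU u -> forall (x : pt) (e : R), 0 < e ->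
    exists2 d : R, 0 < d & forall (y sx sy : pt),
      `|proj1_sig x - proj1_sig y| < d -> settles M u x sx -> settles M u y sy ->
      `|proj1_sig sx - proj1_sig sy| < e.

Definition pseudometric (d : profile -> profile -> R) : Prop :=
  (forall u, d u u = 0) /\ (forall u v, d u v = d v u) /\
  (forall u v w, d u w <= d u v + d v w).

Definition cont_in_u (M : profile -> pt -> (pt -> R)) : Prop :=
  exists d, pseudometric d /\
  forall (x0 : pt) u, profileU u -> forall e : R, 0 < e ->
    exists2 del : R, 0 < del & forall v, profileU v -> d u v < del ->
      forall su sv, settles M u x0 su -> settles M v x0 sv ->
      `|proj1_sig su - proj1_sig sv| < e.

Definition Fprof (u : profile) (p : pt) : set pt := [set x | forall i, u i p <= u i x].
Definition pareto (u : profile) (x : pt) : Prop := Fprof u x = [set x].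

Definition pareto_efficient (M : profile -> pt -> (pt -> R)) : Prop :=
  forall u x0 s, profileU u -> settles M u x0 s -> pareto u s.

Definition symmetric_ANM (M : profile -> pt -> (pt -> R)) : Prop :=
  forall u x0 (sigma : 'S_n) s s', profileU u ->
    settles M u x0 s -> settles M (fun j => u (sigma j)) x0 s' -> s = s'.

Definition replace (u : profile) (i : 'I_n) (v : pt -> R) : profile :=
  fun j => if j == i then v else u j.

Definition can_manipulate (M : profile -> pt -> (pt -> R)) (i : 'I_n) : Prop :=
  exists u x0 v s s', [/\ profileU u, inU v, settles M u x0 s,
    settles M (replace u i v) x0 s' & u i s < u i s'].

End ANM.

(* D is not contained in a line (affine dimension >= 2) *)
Definition not_collinear (R : realType) (m : nat) (D : set 'rV[R]_m) : Prop :=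
  exists a b c, [/\ D a, D b, D c &
    forall s t : R, s *: (b - a) + t *: (c - a) = 0 -> s = 0 /\ t = 0].

From HB Require Import structures.
From mathcomp Require Import all_boot all_order all_algebra all_fingroup.
From mathcomp Require Import all_classical all_reals all_analysis.
From mathcomp Require Import lra zify.
Import Order.TTheory GRing.Theory Num.Theory.
Import numFieldNormedType.Exports.
Set Implicit Arguments. Unset Strict Implicit. Unset Printing Implicit Defensive.

(* Fix affinely independent points A, B, C of D. A strict ranking p of them gives the
   utility in U which is 2 at the top vertex of p, 1 on the edge joining its two top vertices
   and 0 elsewhere on D. For profiles of such utilities every Pareto point is a vertex, so a
   Pareto efficient, symmetric ANM that nobody can manipulate would induce an anonymous,
   Pareto efficient and strategy-proof voting rule for n >= 2 voters over three alternatives.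
   There is no such rule: on electorates with two types of voters, each pairwise contest of a
   Condorcet cycle is decided by a threshold on the number of voters of the first type, and
   suitable electorates mixing the three types of the cycle (or of the reverse cycle) make the
   three contests agree, which strategy-proofness forbids. Symmetry of the ANM finally spreads
   manipulability from one party to all. *)

Inductive alt := altA | altB | altC.

Definition alt_eqb (x y : alt) :=
  match x, y with altA, altA | altB, altB | altC, altC => true | _, _ => false end.

Lemma alt_eqP : Equality.axiom alt_eqb.
Proof. by case; case; constructor. Qed.

HB.instance Definition _ := hasDecEq.Build alt alt_eqP.

Lemma alt_cover (x y z w : alt) : x != y -> y != z -> x != z -> [\/ w = x, w = y | w = z].
Proof.
by case: x; case: y; case: z; case: w => //= *;
  first [exact: Or31 | exact: Or32 | exact: Or33].
Qed.

(* [ABC] is the strict preference A > B > C, and so on. *)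
Inductive pref := ABC | ACB | BAC | BCA | CAB | CBA.

Definition pref_code (p : pref) : nat :=
  match p with ABC => 0 | ACB => 1 | BAC => 2 | BCA => 3 | CAB => 4 | CBA => 5 end.

Definition pref_eqb (p q : pref) := pref_code p == pref_code q.

Lemma pref_eqP : Equality.axiom pref_eqb.
Proof. by case; case; constructor. Qed.

HB.instance Definition _ := hasDecEq.Build pref pref_eqP.

Definition top (p : pref) : alt :=
  match p with ABC | ACB => altA | BAC | BCA => altB | CAB | CBA => altC end.

Definition mid (p : pref) : alt :=
  match p with BAC | CAB => altA | ABC | CBA => altB | ACB | BCA => altC end.

Definition score (p : pref) (x : alt) : nat :=
  if x == top p then 2 else if x == mid p then 1 else 0.

Lemma score_top p : score p (top p) = 2.
Proof. by case: p. Qed.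

Lemma score_le2 p x : (score p x <= 2)%N.
Proof. by case: p; case: x. Qed.

Lemma score_ge2 p x : (2 <= score p x)%N -> x = top p.
Proof. by case: p; case: x. Qed.

Lemma score_bottom p x : x != top p -> x != mid p -> score p x = 0.
Proof. by rewrite /score => /negbTE -> /negbTE ->. Qed.

Lemma score0_uniq p x y : score p x = 0 -> (score p y <= 0)%N -> y = x.
Proof. by case: p; case: x; case: y. Qed.

Lemma top_neq_mid p : top p != mid p.
Proof. by case: p. Qed.

Lemma nat_threshold n (P : nat -> bool) :
  (forall k, (k < n)%N -> P k -> P k.+1) -> P 0 = false -> P n ->
  exists2 t, (0 < t <= n)%N & forall k, (k <= n)%N -> P k = (t <= k)%N.
Proof.
move=> P_succ P0 Pn; have [t Pt t_min] := ex_minnP (ex_intro P n Pn).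
have t_gt0 : (0 < t)%N by case: t Pt {t_min} => //; rewrite P0.
exists t => [|k kn]; first by rewrite t_gt0 t_min.
apply/idP/idP => [/t_min //|tk].
have P_up d : (t + d <= n)%N -> P (t + d).
  by elim: d => [|d IH] tdn; rewrite ?addn0 // addnS P_succ ?IH //; lia.
by have := P_up (k - t); rewrite subnKC //; apply.
Qed.

Lemma thresholds_sum n a b c : (2 <= n)%N ->
  (0 < a <= n)%N -> (0 < b <= n)%N -> (0 < c <= n)%N ->
  exists x y z, [/\ (x <= n)%N, (y <= n)%N & (z <= n)%N] /\
    ([/\ (x + y + z = 2 * n)%N, (a <= x)%N, (b <= y)%N & (c <= z)%N] \/
     [/\ (x + y + z = n)%N, (x < a)%N, (y < b)%N & (z < c)%N]).
Proof.
move=> n2 a_n b_n c_n; have [abc | abc] := leqP (a + b + c) (2 * n).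
  have [bc | bc] := leqP (b + c) n.
    by exists n, (n - c), c; split; [split | left; split]; lia.
  by exists (2 * n - b - c), b, c; split; [split | left; split]; lia.
have [ab | ab] := leqP b (n - a.-1).
  by exists a.-1, b.-1, (n - a.-1 - b.-1); split; [split | right; split]; lia.
by exists a.-1, (n - a.-1), 0; split; [split | right; split]; lia.
Qed.

Ltac perm_nseq :=
  apply/seq.permP => pp; rewrite /= ?count_cat ?count_nseq /=; nia.

Section AnonymousRule.
Variables (n : nat) (f : seq pref -> alt).
Hypothesis n_ge2 : (2 <= n)%N.
Hypothesis f_anonymous : forall s t, size s = n -> perm_eq s t -> f s = f t.
Hypothesis f_strategyproof : forall p q r,
  size r = n.-1 -> (score p (f (q :: r)) <= score p (f (p :: r)))%N.
Hypothesis f_pareto : forall s x y, size s = n -> x != y ->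
  all (fun p => score p x <= score p y)%N s -> f s != x.

Lemma f_switch_to_top p q r :
  size r = n.-1 -> f (p :: r) = top q -> f (q :: r) = top q.
Proof.
by move=> r_n fpr; apply: score_ge2; rewrite -(score_top q) -fpr; apply: f_strategyproof.
Qed.

Lemma f_switch_from_bottom p q r x : score p x = 0 ->
  size r = n.-1 -> f (p :: r) = x -> f (q :: r) = x.
Proof.
by move=> px0 r_n fpr; apply: (score0_uniq px0); rewrite -px0 -fpr; apply: f_strategyproof.
Qed.

Lemma f_switch_block (P : pred pref) p q x k rest s t :
  (forall r, size r = n.-1 -> all P r -> f (p :: r) = x -> f (q :: r) = x) ->
  P p -> P q -> all P rest -> (k + size rest)%N = n ->
  perm_eq s (nseq k p ++ rest) -> perm_eq (nseq k q ++ rest) t ->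
  f s = x -> f t = x.
Proof.
move=> step Pp Pq; elim: k rest s => [|k IH] rest s Prest size_n ps qt fs.
  have size_s : size s = n by rewrite (perm_size ps).
  by rewrite -(f_anonymous _ qt) -?(f_anonymous size_s ps) // -(perm_size ps).
have size_s : size s = n by rewrite (perm_size ps) size_cat size_nseq.
have fs' : f (q :: nseq k p ++ rest) = x.
  apply: step; first by rewrite size_cat size_nseq; lia.
    by rewrite all_cat all_nseq Pp orbT.
  by rewrite -fs (f_anonymous size_s ps).
apply: (IH (q :: rest) _ _ _ _ _ fs'); rewrite /= ?Pq //; first lia.
  exact/permEl/(perm_catCA [:: q]).
by apply: perm_trans qt; rewrite perm_sym; exact/permEl/(perm_catCA [:: q]).
Qed.

Lemma f_switch p q x k rest s t :
  (forall r, size r = n.-1 -> f (p :: r) = x -> f (q :: r) = x) ->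
  (k + size rest)%N = n ->
  perm_eq s (nseq k p ++ rest) -> perm_eq (nseq k q ++ rest) t ->
  f s = x -> f t = x.
Proof.
move=> step; apply: (@f_switch_block predT) => //; last exact: all_predT.
by move=> r r_n _; apply: step.
Qed.

Lemma f_unanimous p : f (nseq n p) = top p.
Proof.
apply/eqP/negPn/negP => fp_ntop.
have dominated : all (fun q => score q (f (nseq n p)) <= score q (top p))%N (nseq n p).
  by rewrite all_nseq score_top score_le2 orbT.
by have := f_pareto (size_nseq _ _) fp_ntop dominated; rewrite eqxx.
Qed.

Lemma f_pareto2 p q k x y : (k <= n)%N -> y != x ->
  (score p x <= score p y)%N -> (score q x <= score q y)%N ->
  f (nseq k p ++ nseq (n - k) q) != x.
Proof.
move=> kn yx px qx; apply: (@f_pareto _ x y); last by rewrite all_cat !all_nseq /= px qx !orbT.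
  by rewrite size_cat !size_nseq; lia.
by rewrite eq_sym.
Qed.

Definition wins p q k := f (nseq k p ++ nseq (n - k) q) == top p.

Lemma wins_succ p q k : (k < n)%N -> wins p q k -> wins p q k.+1.
Proof.
move=> kn /eqP fk; apply/eqP; move: fk.
apply: (@f_switch q p _ 1 (nseq k p ++ nseq (n - k.+1) q)).
- by move=> r r_n; apply: f_switch_to_top.
- by rewrite size_cat !size_nseq; lia.
- by perm_nseq.
- by perm_nseq.
Qed.

Lemma wins0 p q : top p != top q -> wins p q 0 = false.
Proof. by move=> pq; rewrite /wins /= subn0 f_unanimous eq_sym (negbTE pq). Qed.

Lemma winsn p q : wins p q n.
Proof. by rewrite /wins subnn cats0 f_unanimous. Qed.

Section Cycle.
Variables (p q r : pref).
Hypotheses (pq : mid p = top q) (qr : mid q = top r) (rp : mid r = top p).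

Lemma cycle_tops_neq : [/\ top p != top q, top q != top r & top p != top r].
Proof. by split; [rewrite -pq | rewrite -qr | rewrite -rp eq_sym]; apply: top_neq_mid. Qed.

(* Voters of type r may switch to p without losing top p, and voters of type q, who rank
   top p last, may switch to r without changing the outcome. *)
Lemma cycle_top a b c : (a + b + c)%N = n ->
  f (nseq a p ++ nseq b q ++ nseq c r) = top p ->
  wins p q (a + c) /\ ~~ wins r p (b + c).
Proof.
move=> abc fs; have [pq' qr' pr'] := cycle_tops_neq; split.
  apply/eqP; move: fs; apply: (@f_switch r p _ c (nseq a p ++ nseq b q)).
  - by move=> s s_n; apply: f_switch_to_top.
  - by rewrite size_cat !size_nseq; lia.
  - by perm_nseq.
  - by perm_nseq.
have qp0 : score q (top p) = 0 by apply: score_bottom; rewrite ?qr.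
rewrite /wins; suff -> : f (nseq (b + c) r ++ nseq (n - (b + c)) p) = top p by [].
move: fs; apply: (@f_switch q r _ b (nseq a p ++ nseq c r)).
- by move=> s s_n; apply: f_switch_from_bottom.
- by rewrite size_cat !size_nseq; lia.
- by perm_nseq.
- by perm_nseq.
Qed.

End Cycle.

(* The outcome of the mixed electorate is one of the three tops, and [cycle_top] for the
   matching rotation of the cycle contradicts each of them. *)
Lemma cycle_wins_not_constant p q r a b c :
  mid p = top q -> mid q = top r -> mid r = top p -> (a + b + c)%N = n ->
  ~ (wins p q (a + c) = wins q r (a + b) /\ wins q r (a + b) = wins r p (b + c)).
Proof.
move=> pq qr rp abc [e1 e2]; have [pq' qr' pr'] := cycle_tops_neq pq qr rp.
have s_n : size (nseq a p ++ nseq b q ++ nseq c r) = n by rewrite !size_cat !size_nseq; lia.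
case: (alt_cover (f (nseq a p ++ nseq b q ++ nseq c r)) pq' qr' pr') => fs.
- by have [] := cycle_top pq qr rp abc fs; rewrite e1 e2 => ->.
- have fs' : f (nseq b q ++ nseq c r ++ nseq a p) = top q.
    by rewrite -fs; apply/esym/f_anonymous => //; perm_nseq.
  have [] := cycle_top qr rp pq (_ : b + c + a = n)%N fs'; first lia.
  by rewrite addnC -e1 [(c + a)%N]addnC => ->.
- have fs' : f (nseq c r ++ nseq a p ++ nseq b q) = top r.
    by rewrite -fs; apply/esym/f_anonymous => //; perm_nseq.
  have [] := cycle_top rp pq qr (_ : c + a + b = n)%N fs'; first lia.
  by rewrite addnC -e2 => ->.
Qed.

Section Link.
Variables (u v w : alt) (p1 q1 p2 q2 : pref).
Hypotheses (p1_top : top p1 = u) (p1_mid : mid p1 = v) (q1_top : top q1 = v)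
  (q1_mid : mid q1 = w) (p2_top : top p2 = u) (p2_mid : mid p2 = w)
  (q2_top : top q2 = v) (q2_mid : mid q2 = u).

Let uv : u != v. Proof. by rewrite -p1_top -p1_mid top_neq_mid. Qed.
Let vw : v != w. Proof. by rewrite -q1_top -q1_mid top_neq_mid. Qed.
Let uw : u != w. Proof. by rewrite -p2_top -p2_mid top_neq_mid. Qed.
Let vu : v != u. Proof. by rewrite eq_sym. Qed.
Let wv : w != v. Proof. by rewrite eq_sym. Qed.
Let wu : w != u. Proof. by rewrite eq_sym. Qed.

Let scoreE := (p1_top, p1_mid, q1_top, q1_mid, p2_top, p2_mid, q2_top, q2_mid, eqxx,
  negbTE uv, negbTE vw, negbTE uw, negbTE vu, negbTE wv, negbTE wu).

Lemma link_outcome_neq_w j : (j <= n)%N -> f (nseq j p1 ++ nseq (n - j) q1) != w.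
Proof.
by move=> jn; apply: (f_pareto2 (y := v)); rewrite // /score ?scoreE.
Qed.

Lemma link_step r : size r = n.-1 -> all (fun t => score t w <= score t u)%N r ->
  f (p1 :: r) = v -> f (p2 :: r) = v.
Proof.
move=> r_n r_uw f1.
have f2u : f (p2 :: r) != u.
  by apply/eqP => f2; have := f_strategyproof p1 p2 r_n; rewrite f1 f2 /score ?scoreE.
have f2w : f (p2 :: r) != w.
  apply: (@f_pareto _ w u) => //; first by rewrite /= r_n; lia.
  by rewrite /= r_uw /score ?scoreE.
by case: (alt_cover (f (p2 :: r)) uv vw uw) => f2 //; move: f2u f2w; rewrite f2 eqxx.
Qed.

Lemma link_outcome j : (j <= n)%N ->
  f (nseq j p1 ++ nseq (n - j) q1) = f (nseq j p2 ++ nseq (n - j) q2).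
Proof.
move=> jn; have size_j : (j + size (nseq (n - j) q1))%N = n by rewrite size_nseq; lia.
case: (alt_cover (f (nseq j p1 ++ nseq (n - j) q1)) uv vw uw) => f1; rewrite f1; apply/esym.
- have f12 : f (nseq j p2 ++ nseq (n - j) q1) = u.
    move: f1; apply: (@f_switch p1 p2 _ j (nseq (n - j) q1)) => //.
    by move=> r r_n; rewrite -p2_top; apply: f_switch_to_top.
  move: f12; apply: (@f_switch q1 q2 _ (n - j) (nseq j p2)).
  + by move=> r r_n; apply: f_switch_from_bottom; rewrite /score ?scoreE.
  + by rewrite size_nseq; lia.
  + by perm_nseq.
  + by perm_nseq.
- have f12 : f (nseq j p1 ++ nseq (n - j) q2) = v.
    move: f1; apply: (@f_switch q1 q2 _ (n - j) (nseq j p1)).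
    + by move=> r r_n; rewrite -q2_top; apply: f_switch_to_top.
    + by rewrite size_nseq; lia.
    + by perm_nseq.
    + by perm_nseq.
  move: f12.
  apply: (@f_switch_block (fun t => score t w <= score t u)%N p1 p2 _ j (nseq (n - j) q2)) => //.
  + exact: link_step.
  + by rewrite /score ?scoreE.
  + by rewrite /score ?scoreE.
  + by rewrite all_nseq /score ?scoreE orbT.
  + by rewrite size_nseq; lia.
- by move: (link_outcome_neq_w jn); rewrite f1 eqxx.
Qed.

Lemma link_wins k : (k <= n)%N -> wins q2 p2 k = ~~ wins p1 q1 (n - k).
Proof.
move=> kn; rewrite /wins q2_top p1_top.
have -> : f (nseq k q2 ++ nseq (n - k) p2) = f (nseq (n - k) p1 ++ nseq (n - (n - k)) q1).
  rewrite link_outcome; last lia.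
  by apply: f_anonymous; [rewrite size_cat !size_nseq; lia | perm_nseq].
have := link_outcome_neq_w (leq_subr k n).
by case: (alt_cover (f (nseq (n - k) p1 ++ nseq (n - (n - k)) q1)) uv vw uw) => ->;
  rewrite ?scoreE.
Qed.

End Link.

Lemma wins_threshold p q : top p != top q ->
  exists2 t, (0 < t <= n)%N & forall k, (k <= n)%N -> wins p q k = (t <= k)%N.
Proof. by move=> pq; apply: nat_threshold; [apply: wins_succ | apply: wins0 | apply: winsn]. Qed.

Lemma anonymous_strategyproof_pareto_absurd : False.
Proof.
have [a a_n Pa] := @wins_threshold ABC BCA isT.
have [b b_n Qb] := @wins_threshold BCA CAB isT.
have [c c_n Sc] := @wins_threshold CAB ABC isT.
have [x [y [z [[xn yn zn] [[xyz ax by' cz] | [xyz xa yb zc]]]]]] :=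
  thresholds_sum n_ge2 a_n b_n c_n.
  apply: (@cycle_wins_not_constant ABC BCA CAB (n - z) (n - x) (n - y)) => //; first lia.
  have -> : (n - z + (n - y) = x)%N by lia.
  have -> : (n - z + (n - x) = y)%N by lia.
  have -> : (n - x + (n - y) = z)%N by lia.
  by rewrite Pa // Qb // Sc // ax by' cz.
have l1 k : (k <= n)%N -> wins BAC ACB k = ~~ wins ABC BCA (n - k).
  by apply: (@link_wins altA altB altC).
have l2 k : (k <= n)%N -> wins ACB CBA k = ~~ wins CAB ABC (n - k).
  by apply: (@link_wins altC altA altB).
have l3 k : (k <= n)%N -> wins CBA BAC k = ~~ wins BCA CAB (n - k).
  by apply: (@link_wins altB altC altA).
apply: (@cycle_wins_not_constant ACB CBA BAC x z y) => //; first lia.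
rewrite l1 ?l2 ?l3; [|lia..].
have -> : (n - (x + y) = z)%N by lia.
have -> : (n - (x + z) = y)%N by lia.
have -> : (n - (z + y) = x)%N by lia.
rewrite Pa // Qb // Sc //.
by move: xa yb zc; rewrite !ltnNge => /negbTE -> /negbTE -> /negbTE ->.
Qed.

End AnonymousRule.

Section Transfer.
Variables (R : realType) (m n : nat) (D : set 'rV[R]_m).
Variable M : profile n D -> pt D -> (pt D -> R).

Lemma symmetric_can_manipulate : is_ANM M -> symmetric_ANM M ->
  forall i j, can_manipulate M j -> can_manipulate M i.
Proof.
move=> M_ANM M_sym i j [u [x0 [v [s [s' [uU vU us us' lt]]]]]].
pose sigma := tperm i j.
have sigmaE k : (sigma k == j) = (k == i).
  by rewrite -{1}(tpermL i j) (inj_eq (@perm_inj _ sigma)).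
have uvU : profileU (replace u j v) by move=> k; rewrite /replace; case: ifP.
exists (fun k => u (sigma k)), x0, v, s, s'; split.
- by move=> k; apply: uU.
- exact: vU.
- have [_ [z [zmax _]]] := M_ANM (fun k => u (sigma k)) x0 (fun k => uU _).
  by rewrite (M_sym u x0 sigma s z uU us zmax).
- have -> : replace (fun k => u (sigma k)) i v = (fun k => replace u j v (sigma k)).
    by apply: funext => k; rewrite /replace sigmaE.
  have [_ [z [zmax _]]] := M_ANM (fun k => replace u j v (sigma k)) x0 (fun k => uvU _).
  by rewrite (M_sym _ x0 sigma s' z uvU us' zmax).
- by rewrite /sigma tpermL.
Qed.

End Transfer.

Local Open Scope classical_set_scope.
Local Open Scope ring_scope.

Section Segment.
Variables (R : realType) (m : nat).
Implicit Types p q : 'rV[R]_m.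

Definition seg p q : set 'rV[R]_m := (fun t : R => p + t *: (q - p)) @` `[0, 1].

Lemma segP p q x : seg p q x <-> exists t : R, [/\ 0 <= t, t <= 1 & x = p + t *: (q - p)].
Proof.
split; first by case=> t; rewrite /= in_itv /= => /andP[t0 t1] <-; exists t.
by case=> t [t0 t1 ->]; exists t => //; rewrite /= in_itv /= t0 t1.
Qed.

Lemma seg_start p q : seg p q p.
Proof. by apply/segP; exists 0; rewrite scale0r addr0 lexx ler01. Qed.

Lemma seg_end p q : seg p q q.
Proof. by apply/segP; exists 1; rewrite scale1r lexx ler01 addrC subrK. Qed.

Lemma seg_id p : seg p p = [set p].
Proof.
apply/seteqP; split => [x /segP[t [_ _ ->]] | x ->]; last exact: seg_start.
by rewrite subrr scaler0 addr0.
Qed.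

Lemma seg_closed p q : closed (seg p q).
Proof.
apply: compact_closed; first exact: norm_hausdorff.
apply: continuous_compact; last exact: segment_compact.
apply: continuous_subspaceT => t.
by apply: cvgD; [exact: cvg_cst | exact: scalel_continuous].
Qed.

Lemma seg_convex p q : convex_set (seg p q).
Proof.
move=> x y l; rewrite !in_setE => /segP[s [s0 s1 ->]] /segP[t [t0 t1 ->]].
have l0 : 0 <= l%:inum by [].
have l1 : l%:inum <= 1 by [].
apply/segP; exists (l%:inum * s + (1 - l%:inum) * t); split; [nra | nra |].
rewrite -[conv _ _ _]/(l%:num *: (p + s *: (q - p)) + (1 - l%:num) *: (p + t *: (q - p))).
move: (q - p) => v; rewrite !scalerDr !scalerA addrACA -[l%:num *: p + _]scalerDl -scalerDl.
by rewrite [l%:num + _]addrC subrK scale1r.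
Qed.

Lemma convex_seg_sub (D : set 'rV[R]_m) p q : convex_set D -> D p -> D q -> seg p q `<=` D.
Proof.
move=> D_convex Dp Dq x /segP[t [t0 t1 ->]].
have := D_convex q p (Itv01 t0 t1); rewrite !in_setE => /(_ Dq Dp).
congr D; rewrite -[conv _ _ _]/(t *: q + (1 - t) *: p).
by rewrite scalerBr scalerBl scale1r addrCA.
Qed.

End Segment.

Section SuperlevelSet.
Variables (R : realType) (m : nat) (D : set 'rV[R]_m).

Lemma embed_Fsup (g : 'rV[R]_m -> R) (x : pt D) :
  embed (Fsup (fun y : pt D => g (sval y)) x) = [set v | D v /\ g (sval x) <= g v].
Proof.
apply/seteqP; split; first by move=> _ [[v Dv] gxv <-].
by move=> v [Dv gxv]; exists (exist _ v Dv).
Qed.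

End SuperlevelSet.

Section Triangle.
Variables (R : realType) (m : nat) (A B C : 'rV[R]_m).
Hypothesis ABC_indep : forall s t : R, s *: (B - A) + t *: (C - A) = 0 -> s = 0 /\ t = 0.

Lemma triangle_AB : A != B.
Proof.
apply/eqP => eqAB; have [] := @ABC_indep 1 0; first by rewrite eqAB subrr scaler0 scale0r addr0.
by move=> /eqP; rewrite oner_eq0.
Qed.

Lemma triangle_AC : A != C.
Proof.
apply/eqP => eqAC; have [] := @ABC_indep 0 1; first by rewrite eqAC subrr scaler0 scale0r add0r.
by move=> _ /eqP; rewrite oner_eq0.
Qed.

Lemma triangle_BC : B != C.
Proof.
apply/eqP => eqBC; have [] := @ABC_indep 1 (-1); first by rewrite eqBC scaleN1r scale1r subrr.
by move=> /eqP; rewrite oner_eq0.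
Qed.

Lemma C_notin_AB : ~ seg A B C.
Proof.
move=> /segP[t [_ _ Ct]].
have CA : C - A = t *: (B - A) by rewrite Ct addrAC subrr add0r.
have [] := @ABC_indep t (-1); first by rewrite scaleN1r CA subrr.
by move=> _ /eqP; rewrite oppr_eq0 oner_eq0.
Qed.

Lemma B_notin_AC : ~ seg A C B.
Proof.
move=> /segP[t [_ _ Bt]].
have BA : B - A = t *: (C - A) by rewrite Bt addrAC subrr add0r.
have [] := @ABC_indep 1 (- t); first by rewrite scale1r scaleNr BA subrr.
by move=> /eqP; rewrite oner_eq0.
Qed.

Lemma A_notin_BC : ~ seg B C A.
Proof.
move=> /segP[t [_ _ At]].
have BA : B - A = - (t *: (C - B)) by rewrite At opprD addrA subrr add0r.
have CA : C - A = (1 - t) *: (C - B).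
  have -> : C - A = (C - B) + (B - A) by rewrite addrA subrK.
  by rewrite BA scalerBl scale1r.
have [t1 t0] : 1 - t = 0 /\ t = 0.
  by apply: ABC_indep; rewrite BA CA scalerN !scalerA mulrC addNr.
by move: t1; rewrite t0 subr0 => /eqP; rewrite oner_eq0.
Qed.

Lemma seg_AB_AC x : seg A B x -> seg A C x -> x = A.
Proof.
move=> /segP[s [_ _ xs]] /segP[t [_ _ xt]].
have st : s *: (B - A) = t *: (C - A) by apply: (@addrI _ A); rewrite -xs -xt.
have [s0 _] : s = 0 /\ - t = 0 by apply: ABC_indep; rewrite scaleNr st subrr.
by rewrite xs s0 scale0r addr0.
Qed.

Definition vertex (x : alt) : 'rV[R]_m :=
  match x with altA => A | altB => B | altC => C end.

Lemma eq_vertex x y : (vertex x == vertex y) = (x == y).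
Proof.
have [nAB nBC nAC] := And3 triangle_AB triangle_BC triangle_AC.
by case: x; case: y; rewrite /= ?eqxx ?(negbTE nAB) ?(negbTE nAC) ?(negbTE nBC)
  // eq_sym ?(negbTE nAB) ?(negbTE nAC) ?(negbTE nBC).
Qed.

Definition side (p : pref) : set 'rV[R]_m :=
  match p with ABC | BAC => seg A B | ACB | CAB => seg A C | BCA | CBA => seg B C end.

Lemma side_top p : side p (vertex (top p)).
Proof. by case: p => /=; first [exact: seg_start | exact: seg_end]. Qed.

Lemma side_vertex p x : `[< side p (vertex x) >] = (x == top p) || (x == mid p).
Proof.
case: p; case: x => /=;
  first [ rewrite asboolT //; first [exact: seg_start | exact: seg_end]
        | rewrite asboolF //; first [exact: C_notin_AB | exact: B_notin_AC | exact: A_notin_BC] ].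
Qed.

Lemma side_closed p : closed (side p).
Proof. by case: p; apply: seg_closed. Qed.

Lemma side_convex p : convex_set (side p).
Proof. by case: p; apply: seg_convex. Qed.

Lemma sides_common_vertex v : exists y, forall p, side p v -> side p (vertex y).
Proof.
have [vBC | vBC] := pselect (seg B C v); last first.
  by exists altA; case=> //= h; first [exact: seg_start | exact: seg_end | case: (vBC h)].
have [vAB | vAB] := pselect (seg A B v); last first.
  by exists altC; case=> //= h; first [exact: seg_start | exact: seg_end | case: (vAB h)].
exists altB; case=> //= vAC; first [exact: seg_start | exact: seg_end | exfalso].
  by apply: A_notin_BC; rewrite -(seg_AB_AC vAB vAC).
by apply: A_notin_BC; rewrite -(seg_AB_AC vAB vAC).
Qed.

Definition utility (p : pref) (v : 'rV[R]_m) : R :=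
  if v == vertex (top p) then 2 else if `[< side p v >] then 1 else 0.

Lemma utility_vertex p x : utility p (vertex x) = (score p x)%:R.
Proof.
rewrite /utility /score eq_vertex side_vertex.
by case: (x == top p) => //=; case: (x == mid p).
Qed.

Lemma utility_ge0 p v : 0 <= utility p v.
Proof. by rewrite /utility; case: ifP => _; [|case: ifP => _]; lra. Qed.

Lemma utility_le2 p v : utility p v <= 2.
Proof. by rewrite /utility; case: ifP => _; [|case: ifP => _]; lra. Qed.

Lemma utility_ge2 p v : 2 <= utility p v -> v = vertex (top p).
Proof. by rewrite /utility; case: ifP => [/eqP // | _]; case: ifP => _ le2; exfalso; lra. Qed.

Lemma utility_ge1 p v : 1 <= utility p v <-> side p v.
Proof.
rewrite /utility; case: ifP => [/eqP -> | _].
  by split=> _; [exact: side_top | lra].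
case: asboolP => side_v; split=> h.
- exact: side_v.
- exact: lexx.
- by exfalso; lra.
- by case: (side_v h).
Qed.

Lemma utility_le p v w : v != vertex (top p) -> (side p v -> side p w) ->
  utility p v <= utility p w.
Proof.
move=> v_top vw; rewrite {1}/utility (negbTE v_top).
case: asboolP => [/vw/utility_ge1 // | _]; exact: utility_ge0.
Qed.

Section Realization.
Variables (n : nat) (D : set 'rV[R]_m) (M : profile n D -> pt D -> (pt D -> R)).
Hypotheses (D_closed : closed D) (D_convex : convex_set D).
Hypotheses (DA : D A) (DB : D B) (DC : D C).

Lemma vertex_in x : D (vertex x).
Proof. by case: x. Qed.

Definition vertex_pt x : pt D := exist _ (vertex x) (vertex_in x).

Lemma side_sub p : side p `<=` D.
Proof. by case: p; apply: convex_seg_sub. Qed.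

Lemma utility_superlevel p v0 : D v0 ->
  [\/ [set v | D v /\ utility p v0 <= utility p v] = [set vertex (top p)],
      [set v | D v /\ utility p v0 <= utility p v] = side p |
      [set v | D v /\ utility p v0 <= utility p v] = D].
Proof.
move=> Dv0; have [-> | v0_top] := eqVneq v0 (vertex (top p)).
  apply: Or31; apply/seteqP; split => [v [_] | _ ->]; last by split; [exact: vertex_in|].
  by rewrite utility_vertex score_top => /utility_ge2.
have [side_v0 | side_v0] := pselect (side p v0).
  apply: Or32; apply/seteqP; split => [v [_ le] | v side_v].
    by apply/utility_ge1; apply: le_trans le; apply/utility_ge1.
  by split; [exact: side_sub side_v | apply: utility_le => // _].
apply: Or33; apply/seteqP; split => [v [] // | v Dv]; split => //.
by rewrite {1}/utility (negbTE v0_top) asboolF //; apply: utility_ge0.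
Qed.

Lemma inU_utility p : inU (fun x : pt D => utility p (sval x)).
Proof.
split.
  move=> [v0 Dv0]; rewrite embed_Fsup /=.
  case: (utility_superlevel p Dv0) => ->; last by [].
    by rewrite -seg_id; split; [exact: seg_closed | exact: seg_convex].
  by split; [exact: side_closed | exact: side_convex].
exists (vertex_pt (top p)); split => [y | [v Dv] vmax] /=.
  by rewrite utility_vertex score_top; apply: utility_le2.
have := vmax (vertex_pt (top p)); rewrite /= utility_vertex score_top => /utility_ge2 v_top.
by subst v; congr exist; exact: Prop_irrelevance.
Qed.

Definition profile_of (s : seq pref) : profile n D := fun j x => utility (nth ABC s j) (sval x).

Lemma profile_ofU s : profileU (profile_of s).
Proof. by move=> j; apply: inU_utility. Qed.

Lemma pareto_vertex s (x : pt D) : pareto (profile_of s) x -> exists y, sval x = vertex y.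
Proof.
move=> x_pareto; have [// | not_vertex] := pselect (exists y, sval x = vertex y).
have [y y_sides] := sides_common_vertex (sval x).
have : Fprof (profile_of s) x (vertex_pt y).
  move=> j; apply: utility_le; last exact: y_sides.
  by apply/eqP => x_top; apply: not_vertex; exists (top (nth ABC s j)).
by rewrite x_pareto => <-; exists y.
Qed.

Variable x0 : pt D.
Hypotheses (n_ge2 : (2 <= n)%N) (M_ANM : is_ANM M) (M_pareto : pareto_efficient M)
  (M_sym : symmetric_ANM M) (M_nonmanipulable : forall j, ~ can_manipulate M j).

Lemma settle_ex s : exists x, settles M (profile_of s) x0 x.
Proof. by have [_ [x [xmax _]]] := M_ANM x0 (profile_ofU s); exists x. Qed.

Definition settle s : pt D := proj1_sig (cid (settle_ex s)).

Lemma settle_spec s : settles M (profile_of s) x0 (settle s).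
Proof. exact: proj2_sig (cid (settle_ex s)). Qed.

Definition outcome s : alt :=
  proj1_sig (cid (pareto_vertex (M_pareto (profile_ofU s) (settle_spec s)))).

Lemma settle_vertex s : sval (settle s) = vertex (outcome s).
Proof. exact: proj2_sig (cid (pareto_vertex (M_pareto (profile_ofU s) (settle_spec s)))). Qed.

Lemma outcome_anonymous s t : size s = n -> perm_eq s t -> outcome s = outcome t.
Proof.
move=> s_n st; apply/eqP; rewrite -eq_vertex -!settle_vertex; apply/eqP.
have /tuple_permP [sigma t_sigma] : perm_eq t (Tuple (introT eqP s_n)) by rewrite perm_sym.
have t_perm : profile_of t = (fun j => profile_of s (sigma j)).
  apply: funext => j; rewrite /profile_of t_sigma -tnth_nth tnth_mktuple.
  by rewrite (tnth_nth ABC).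
have := settle_spec t; rewrite t_perm => settle_t.
by rewrite (M_sym (profile_ofU s) (settle_spec s) settle_t).
Qed.

Lemma outcome_strategyproof p q r :
  (score p (outcome (q :: r)) <= score p (outcome (p :: r)))%N.
Proof.
have n_gt0 : (0 < n)%N by apply: leq_trans n_ge2.
pose j0 : 'I_n := Ordinal n_gt0.
have replace_head :
    replace (profile_of (p :: r)) j0 (fun x => utility q (sval x)) = profile_of (q :: r).
  apply: funext => j; rewrite /replace; case: eqP => [-> // | j_neq].
  by rewrite /profile_of; case: j j_neq => [[|k] k_n] //= j_neq; case: j_neq; apply: val_inj.
rewrite -(ler_nat R) -!utility_vertex -!settle_vertex leNgt; apply/negP => lt.
apply: (M_nonmanipulable (j := j0)).
exists (profile_of (p :: r)), x0, (fun x => utility q (sval x)), (settle (p :: r)),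
  (settle (q :: r)).
split => //; [exact: profile_ofU | exact: inU_utility | exact: settle_spec |].
by rewrite replace_head; exact: settle_spec.
Qed.

Lemma outcome_pareto s x y : size s = n -> x != y ->
  all (fun p => score p x <= score p y)%N s -> outcome s != x.
Proof.
move=> s_n xy dominated; apply/eqP => sx.
have : Fprof (profile_of s) (settle s) (vertex_pt y).
  move=> j; rewrite /profile_of /= settle_vertex sx !utility_vertex ler_nat.
  by apply: (allP dominated); apply: mem_nth; rewrite s_n.
rewrite (M_pareto (profile_ofU s) (settle_spec s)) => /(congr1 sval) /=.
by rewrite settle_vertex sx => /eqP; rewrite eq_vertex eq_sym (negbTE xy).
Qed.

Lemma nonmanipulable_absurd : False.
Proof.
exact: (anonymous_strategyproof_pareto_absurd n_ge2 outcome_anonymous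
  (fun p q r _ => outcome_strategyproof p q r) outcome_pareto).
Qed.

End Realization.

End Triangle.

Theorem mainTheorem6 (R : realType) (m n : nat) (D : set 'rV[R]_m)
    (M : profile n D -> pt D -> (pt D -> R)) :
  (2 <= n)%N ->
  closed D -> convex_set D -> bounded_set D -> D <> setT ->
  not_collinear D ->
  is_ANM M -> cont_in_x M -> cont_in_u M ->
  pareto_efficient M -> symmetric_ANM M ->
  forall i : 'I_n, can_manipulate M i.
Proof.
move=> n_ge2 D_closed D_convex _ _ [A [B [C [DA DB DC ABC_indep]]]] M_ANM _ _ M_pareto M_sym i.
apply: contrapT => i_nonmanipulable.
apply: (nonmanipulable_absurd ABC_indep D_closed D_convex DA DB DC (exist _ A DA) n_ge2
  M_ANM M_pareto M_sym) => j.
by move/(symmetric_can_manipulate M_ANM M_sym i).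
Qed.
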